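(* Let $A=[a_{ijk}]=[A_1,\ldots,A_n]$ be an $n\times n\times n$ PASHM and $L(A)=1A_1+2A_2+\cdots+nA_n=[l_{ij}]$. Then every row sum and every column sum of $L(A)$ equals $\binom{n+1}{2}$. If moreover $A$ is an ASHM, then: (i) every entry of $L(A)$ lies in $\{1,\ldots,n\}$, and the first and last rows and the first and last columns of $L(A)$ are permutations of $1,2,\ldots,n$; (ii) fix $i,j$ and let $1\le k_1<k_2<\cdots<k_p\le n$ ($p\ge1$) be the indices $k$ with $a_{ijk}\neq 0$. Let $r=l_{ij}$. Then (iia) $k_1\le r$ and $p\le 2r-1$; moreover $k_1=r$ implies $p=1$; in particular, if $l_{ij}=1$ then $a_{ij1}=1$ and $a_{ijk}=0$ for $1<k\le n$. (iib) $p\le 2(n-r)+1$; in particular, if $l_{ij}=n$ then $a_{ijn}=1$ and $a_{ijk}=0$ for $1\le k<n$.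
   Context: An $n\times n$ alternating sign matrix (ASM) is an $n\times n$ matrix with entries in $\{0,1,-1\}$ such that in every row and column the nonzeros alternate in sign, beginning and ending with $+1$. An $n\times n\times n$ hypermatrix $A=[a_{ijk}]$ is written $A=[A_1,\ldots,A_n]$ with $A_k=[a_{ijk}]_{i,j}$ its $k$-th horizontal plane; its vertical lines are $(a_{ijk})_{k=1}^n$ for fixed $i,j$. $A$ is a planar alternating sign hypermatrix (PASHM) if each horizontal plane $A_k$ is an ASM and each vertical line sums to $1$. $A$ is an alternating sign hypermatrix (ASHM) if all entries lie in $\{0,\pm1\}$ and in every line (fixing any two of the three indices) the nonzeros alternate in sign beginning and ending with $+1$; every ASHM is a PASHM. *)

(* Hypermatrices are functions 'I_n -> 'I_n -> 'I_n -> int;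
   index k : 'I_n stands for the paper's index k+1. *)
From mathcomp Require Import all_boot all_order all_algebra.
Set Implicit Arguments. Unset Strict Implicit. Unset Printing Implicit Defensive.
Import Order.TTheory GRing.Theory Num.Theory.
Local Open Scope ring_scope.

Definition hypermatrix (n : nat) := 'I_n -> 'I_n -> 'I_n -> int.

Definition alt_line (s : seq int) : bool :=
  all (fun x => x \in [:: 0; 1; -1]) s &&
  (let t := [seq x <- s | x != 0] in
   odd (size t) && (t == mkseq (fun i => (-1) ^+ i) (size t))).

Definition is_ASM (n : nat) (M : 'I_n -> 'I_n -> int) : bool :=
  [forall i : 'I_n, alt_line [seq M i j | j <- enum 'I_n]] &&
  [forall j : 'I_n, alt_line [seq M i j | i <- enum 'I_n]].

Definition is_PASHM (n : nat) (A : hypermatrix n) : Prop :=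
  (forall k : 'I_n, is_ASM (fun i j => A i j k)) /\
  (forall i j : 'I_n, \sum_(k < n) A i j k = 1).

Definition is_ASHM (n : nat) (A : hypermatrix n) : Prop :=
  (forall j k : 'I_n, alt_line [seq A i j k | i <- enum 'I_n]) /\
  (forall i k : 'I_n, alt_line [seq A i j k | j <- enum 'I_n]) /\
  (forall i j : 'I_n, alt_line [seq A i j k | k <- enum 'I_n]).

Definition LA (n : nat) (A : hypermatrix n) (i j : 'I_n) : int :=
  \sum_(k < n) (k.+1)%:Z * A i j k.

Definition nz_count (n : nat) (A : hypermatrix n) (i j : 'I_n) : nat :=
  #|[pred k : 'I_n | A i j k != 0]|.

From mathcomp Require Import all_boot all_order all_algebra.
From mathcomp Require Import zify.
Set Implicit Arguments. Unset Strict Implicit. Unset Printing Implicit Defensive.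
Import Order.TTheory GRing.Theory Num.Theory.
Local Open Scope ring_scope.

(* An alternating line is read by a two-state automaton ([alt_from]) whose state is
   the sum (0 or 1) of the entries read so far: in state 0 the next entry is 0 or 1,
   in state 1 it is 0 or -1, and the line must end in state 1. Induction along the
   line gives sum 1 and, for the weight r = \sum_k (k+1) a_k and the number p of
   nonzero entries, p + 1 <= 2 r and p <= 2 (n - r) + 1, so 1 <= r <= n, and in the
   extreme cases the line has a single nonzero entry, at position r.
   Row and column sums of L(A) come from exchanging sums, each line of each plane
   summing to 1. A boundary plane of an ASHM consists of end entries of lines,
   hence of 0s and 1s; with alternating rows and columns it is a permutation
   matrix, and its L-values are then a permutation of 1..n. *)

Definition alt_pattern (one : bool) (t : seq int) : bool :=
  odd (size t + one) && (t == mkseq (fun i => (-1) ^+ (i + one)) (size t)).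

Lemma alt_pattern_cons one x t :
  alt_pattern one (x :: t) = (x == (-1) ^+ one) && alt_pattern (~~ one) t.
Proof.
rewrite /alt_pattern /mkseq /= -[1%N]/(1 + 0)%N iotaDl -map_comp eqseq_cons add0n andbCA.
rewrite !oddD (@eq_map _ _ _ (fun i => (-1) ^+ (i + ~~ one))).
  by case: one; rewrite /= ?addbT ?addbF ?negbK.
by move=> i /=; case: one; rewrite /= addn0 add1n addn1 // !exprS !mulN1r opprK.
Qed.

(* [alt_from one s]: [s] completes an alternating line whose entries read so far
   sum to [one]. *)
Fixpoint alt_from (one : bool) (s : seq int) : bool :=
  if s is x :: s' then
    if one then ((x == 0) && alt_from true s') || ((x == -1) && alt_from false s')
    else ((x == 0) && alt_from false s') || ((x == 1) && alt_from true s')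
  else one.

Lemma alt_fromE one s :
  alt_from one s =
  all (fun x => x \in [:: 0; 1; -1]) s && alt_pattern one [seq x <- s | x != 0].
Proof.
elim: s one => [|x s IH] one /=; first by case: one.
rewrite !IH; have [->|x0] := eqVneq x 0; first by case: one; rewrite /= ?orbF.
rewrite alt_pattern_cons !inE (negbTE x0).
by case: one; case: eqVneq => [->|] //=; case: eqVneq => [->|] //=; rewrite ?andbF.
Qed.

Lemma alt_lineE s : alt_line s = alt_from false s.
Proof.
rewrite alt_fromE /alt_line /alt_pattern /= addn0.
by under [in RHS]eq_mkseq do rewrite addn0.
Qed.

Definition wsum (s : seq int) : int := \sum_(0 <= i < size s) (i.+1)%:Z * s`_i.

Definition nnz (s : seq int) : nat := count (predC1 0) s.

Lemma wsum_cons x s : wsum (x :: s) = x + \sum_(y <- s) y + wsum s.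
Proof.
rewrite /wsum /= big_nat_recl // mul1r [\sum_(y <- s) y](big_nth 0) -addrA -big_split /=.
by congr (_ + _); apply: eq_bigr => i _; rewrite intS mulrDl; congr (_ + _); apply: mul1r.
Qed.

Lemma alt_from_sum one s : alt_from one s -> \sum_(x <- s) x = (~~ one)%:Z.
Proof.
elim: s one => [|x s IH] [] /=; rewrite ?big_nil ?big_cons //.
  by case/orP=> /andP[/eqP -> /IH ->].
by case/orP=> /andP[/eqP -> /IH ->].
Qed.

Lemma alt_from_nnz_wsum one s : alt_from one s ->
  (nnz s)%:Z + (~~ one)%:Z <= 2 * wsum s /\
  (nnz s)%:Z <= 2 * ((size s)%:Z - wsum s) + (~~ one)%:Z.
Proof.
elim: s one => [|x s IH] one; first by case: one => // _; rewrite /wsum big_geq.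
rewrite /nnz /= -/(nnz s) wsum_cons.
by case: one => /orP[] /andP[/eqP -> Hs]; have := IH _ Hs; rewrite (alt_from_sum Hs) /=; lia.
Qed.

Lemma nnz_eq0 s : (nnz s == 0%N) = all (pred1 0) s.
Proof. by elim: s => //= x s <-; rewrite /nnz /= addn_eq0 eqb0 negbK. Qed.

Lemma alt_from_nnz_gt0 s : alt_from false s -> (0 < nnz s)%N.
Proof.
move=> Hs; rewrite lt0n nnz_eq0; apply/negP => /allP s0.
by move: (alt_from_sum Hs); rewrite big_seq big1 // => x /s0 /eqP.
Qed.

Lemma alt_from_leading_zeros m s : alt_from false s ->
  (forall i, (i < m)%N -> s`_i = 0) ->
  (m.+1)%:Z <= wsum s /\ (wsum s = (m.+1)%:Z -> nnz s = 1%N).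
Proof.
elim: m s => [|m IH] s Hs Hz.
  have := alt_from_nnz_gt0 Hs; have [] := alt_from_nnz_wsum Hs => /= *; split; lia.
case: s Hs Hz => [//|x s] Hs Hz; have x0 : x = 0 by apply: (Hz 0%N).
move: Hs; rewrite x0 /= orbF => Hs; have [] := IH s Hs (fun i => Hz i.+1).
by rewrite wsum_cons (alt_from_sum Hs) /nnz /= -/(nnz s) => *; split; lia.
Qed.

Lemma alt_from_nnz1 s : alt_from false s -> nnz s = 1%N ->
  exists2 k, (k < size s)%N & forall i, s`_i = (i == k)%:R.
Proof.
elim: s => [|x s IH] //= /orP[] /andP[/eqP -> Hs]; rewrite /nnz /= -/(nnz s) => Hn.
  have [k Hk Hsk] := IH Hs Hn; exists k.+1 => // -[|i] //=.
have /all_pred1P -> : all (pred1 0) s by rewrite -nnz_eq0; apply/eqP; lia.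
by exists 0%N => // -[|i] //=; rewrite nth_nseq if_same.
Qed.

Lemma alt_from_head s : alt_from false s -> s`_0 \in [:: 0; 1].
Proof. by case: s => [|x s] //= /orP[] /andP[/eqP ->]. Qed.

Lemma alt_from_last one x s : alt_from one (x :: s) -> last x s \in [:: 0; 1].
Proof.
elim: s x one => [|y s IH] x one /=; first by case: one => /orP[] /andP[/eqP ->].
by case: one => /orP[] /andP[_];
  [exact: (IH _ true)|exact: (IH _ false)|exact: (IH _ false)|exact: (IH _ true)].
Qed.

Lemma alt_from01_nnz one s : alt_from one s -> all (mem [:: 0; 1]) s ->
  nnz s = ~~ one.
Proof.
elim: s one => [|x s IH] [] //= /orP[] /andP[/eqP -> Hs] /andP[x01 /(IH _ Hs)];
  by rewrite /nnz /= -/(nnz s) => ->; move: x01.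
Qed.

Definition line n (F : 'I_n -> int) : seq int := [seq F k | k <- enum 'I_n].

Definition weight n (F : 'I_n -> int) : int := \sum_(k < n) (k.+1)%:Z * F k.

Section Line.
Variables (n : nat) (F : 'I_n -> int).

Lemma size_line : size (line F) = n.
Proof. by rewrite size_map size_enum_ord. Qed.

Lemma nth_line (k : 'I_n) : (line F)`_k = F k.
Proof. by rewrite (nth_map k) ?size_enum_ord // nth_ord_enum. Qed.

Lemma sum_line : \sum_(x <- line F) x = \sum_(k < n) F k.
Proof. by rewrite big_map big_enum. Qed.

Lemma wsum_line : wsum (line F) = weight F.
Proof. by rewrite /wsum size_line big_mkord; apply: eq_bigr => k _; rewrite nth_line. Qed.

Lemma nnz_line : nnz (line F) = #|[pred k | F k != 0]|.
Proof. by rewrite /nnz count_map cardE /enum_mem size_filter filter_predT. Qed.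

End Line.

Section AlternatingLine.
Variables (n : nat) (F : 'I_n -> int).
Hypothesis altF : alt_line (line F).

Let alt_from_line : alt_from false (line F). Proof. by rewrite -alt_lineE. Qed.

Lemma alt_line_sum : \sum_(k < n) F k = 1.
Proof. by rewrite -sum_line (alt_from_sum alt_from_line). Qed.

Lemma alt_line_card_weight :
  #|[pred k | F k != 0]|%:Z <= 2 * weight F - 1 /\
  #|[pred k | F k != 0]|%:Z <= 2 * (n%:Z - weight F) + 1.
Proof.
have := alt_from_nnz_wsum alt_from_line; rewrite size_line wsum_line nnz_line /= => -[? ?].
by split; lia.
Qed.

Lemma alt_line_weight_bounds : 1 <= weight F <= n%:Z.
Proof. by have [? ?] := alt_line_card_weight; apply/andP; split; lia. Qed.

Lemma alt_line_first_nonzero (k1 : 'I_n) :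
  (forall k : 'I_n, (k < k1)%N -> F k = 0) ->
  (k1.+1)%:Z <= weight F /\ (weight F = (k1.+1)%:Z -> #|[pred k | F k != 0]| = 1%N).
Proof.
move=> F0; rewrite -wsum_line -nnz_line; apply: alt_from_leading_zeros alt_from_line _ => m Hm.
have Hmn : (m < n)%N := ltn_trans Hm (ltn_ord k1).
by rewrite -[m]/(val (Ordinal Hmn)) nth_line F0.
Qed.

Lemma alt_line_card1E : #|[pred k | F k != 0]| = 1%N ->
  forall k, F k = if (k.+1)%:Z == weight F then 1 else 0.
Proof.
rewrite -nnz_line => /(alt_from_nnz1 alt_from_line) [k0]; rewrite size_line => Hk0 F1.
have Fk0 k : F k = (val k == k0)%:R by rewrite -nth_line F1.
have -> : weight F = (k0.+1)%:Z.
  rewrite /weight (bigD1 (Ordinal Hk0)) //= Fk0 eqxx mulr1 big1 ?addr0 // => k.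
  by rewrite Fk0 -val_eqE /= => /negbTE ->; rewrite mulr0.
by move=> k; rewrite Fk0 eqz_nat eqSS; case: eqP.
Qed.

Lemma alt_line_weight1 : weight F = 1 -> forall k, F k = if val k == 0%N then 1 else 0.
Proof.
move=> F1; have [pF _] := alt_line_card_weight; rewrite F1 in pF.
have := alt_from_nnz_gt0 alt_from_line; rewrite nnz_line => ?.
by move=> k; rewrite alt_line_card1E ?F1 ?eqz_nat ?eqSS //; lia.
Qed.

Lemma alt_line_weightn : weight F = n%:Z -> forall k, F k = if val k == n.-1 then 1 else 0.
Proof.
move=> Fn; have [_ pF] := alt_line_card_weight; rewrite Fn in pF.
have := alt_from_nnz_gt0 alt_from_line; rewrite nnz_line => ?.
move=> [k Hk]; rewrite alt_line_card1E ?Fn ?eqz_nat /=; last lia.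
by do 2!case: eqP => //; lia.
Qed.

Lemma alt_line_end (k : 'I_n) : val k = 0%N \/ val k = n.-1 -> F k \in [:: 0; 1].
Proof.
rewrite -nth_line => -[->|->]; first exact: alt_from_head alt_from_line.
have := nth_last 0 (line F); rewrite size_line => ->; move: alt_from_line.
by case: (line F) => [|x s] //; apply: alt_from_last.
Qed.

Lemma alt_line01_card : (forall k, F k \in [:: 0; 1]) -> #|[pred k | F k != 0]| = 1%N.
Proof.
move=> F01; rewrite -nnz_line (alt_from01_nnz alt_from_line) //.
by apply/allP => _ /mapP[k _ ->]; apply: F01.
Qed.

End AlternatingLine.

Lemma mem_iota_int (x : int) n :
  1 <= x <= n%:Z -> x \in [seq k%:Z | k <- iota 1 n].
Proof.
move=> /andP[x1 xn]; have -> : x = `|x|%N%:Z by lia.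
have Posz_inj : injective Posz by move=> ? ? [].
by rewrite (mem_map Posz_inj) mem_iota; lia.
Qed.

Lemma uniq_perm_iota_int (s : seq int) n : uniq s -> size s = n ->
  (forall x, x \in s -> 1 <= x <= n%:Z) -> perm_eq s [seq k%:Z | k <- iota 1 n].
Proof.
move=> Us Hs sub; have Ut : uniq [seq k%:Z | k <- iota 1 n].
  by rewrite map_inj_uniq ?iota_uniq // => ? ? [].
apply: uniq_perm => //; apply: (uniq_min_size Us _ _).2 => [x /sub|]; first exact: mem_iota_int.
by rewrite size_map size_iota Hs.
Qed.

Section PermutationMatrix.
Variables (n : nat) (G : 'I_n -> 'I_n -> int).
Hypothesis G01 : forall j k, G j k \in [:: 0; 1].
Hypothesis altRow : forall j, alt_line (line (G j)).
Hypothesis altCol : forall k, alt_line (line (fun j => G j k)).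

Lemma weight_rows_inj : injective (fun j => weight (G j)).
Proof.
move=> j1 j2 /= w12.
have unitRow j := alt_line_card1E (altRow j) (alt_line01_card (altRow j) (G01 j)).
have unitCol k := alt_line_card1E (altCol k) (alt_line01_card (altCol k) (G01^~ k)).
have /card_gt0P[k] : (0 < #|[pred k | G j1 k != 0]|)%N by rewrite alt_line01_card.
rewrite inE => Gk1; have Gk2 : G j2 k != 0 by move: Gk1; rewrite !unitRow w12.
have hit j : G j k != 0 -> (j.+1)%:Z = weight (fun j => G j k).
  by rewrite unitCol; case: ifP => [/eqP|_]; rewrite ?eqxx.
by apply: val_inj; have := hit _ Gk1; rewrite -(hit _ Gk2) => -[].
Qed.

Lemma perm_eq_weight_rows :
  perm_eq [seq weight (G j) | j <- enum 'I_n] [seq k%:Z | k <- iota 1 n].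
Proof.
apply: uniq_perm_iota_int; first by rewrite (map_inj_uniq weight_rows_inj) enum_uniq.
  by rewrite size_map size_enum_ord.
by move=> _ /mapP[j _ ->]; apply: alt_line_weight_bounds.
Qed.

End PermutationMatrix.

Lemma sum_nat_succ n : \sum_(k < n) (k.+1)%:Z = ('C(n.+1, 2))%:Z.
Proof.
rewrite -bin2_sum big_nat_recl // big_mkord add0n.
by rewrite (big_morph Posz PoszD (erefl 0%:Z)).
Qed.

Theorem mainTheorem3 (n : nat) (A : hypermatrix n) :
  is_PASHM A ->
  ((forall i : 'I_n, \sum_(j < n) LA A i j = ('C(n.+1, 2))%:Z) /\
   (forall j : 'I_n, \sum_(i < n) LA A i j = ('C(n.+1, 2))%:Z)) /\
  (is_ASHM A ->
   ((forall i j : 'I_n, 1 <= LA A i j <= n%:Z) /\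
    (forall i : 'I_n, val i = 0%N \/ val i = n.-1 ->
       perm_eq [seq LA A i j | j <- enum 'I_n] [seq (k%:Z) | k <- iota 1 n]) /\
    (forall j : 'I_n, val j = 0%N \/ val j = n.-1 ->
       perm_eq [seq LA A i j | i <- enum 'I_n] [seq (k%:Z) | k <- iota 1 n])) /\
   (forall i j : 'I_n,
      (forall k1 : 'I_n, A i j k1 != 0 ->
         (forall k : 'I_n, (k < k1)%N -> A i j k = 0) ->
         (k1.+1)%:Z <= LA A i j /\
         (LA A i j = (k1.+1)%:Z -> nz_count A i j = 1%N)) /\
      (nz_count A i j)%:Z <= 2 * LA A i j - 1 /\
      (LA A i j = 1 -> forall k : 'I_n, A i j k = (if val k == 0%N then 1 else 0)) /\
      (nz_count A i j)%:Z <= 2 * (n%:Z - LA A i j) + 1 /\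
      (LA A i j = n%:Z -> forall k : 'I_n, A i j k = (if val k == n.-1 then 1 else 0)))).
Proof.
move=> [planes _]; have LAE i j : LA A i j = weight (A i j) by [].
have rowA i k : alt_line (line (fun j => A i j k)) by case/andP: (planes k) => /forallP/(_ i).
have colA j k : alt_line (line (fun i => A i j k)) by case/andP: (planes k) => _ /forallP/(_ j).
split.
  split=> [i|j]; rewrite /LA exchange_big -sum_nat_succ; apply: eq_bigr => k _.
    by rewrite -mulr_sumr (alt_line_sum (rowA i k)) mulr1.
  by rewrite -mulr_sumr (alt_line_sum (colA j k)) mulr1.
move=> [altI [altJ altK]]; split.
  split; first by move=> i j; rewrite LAE; exact: alt_line_weight_bounds (altK i j).
  split=> [i0 Hi0|j0 Hj0].
  - apply: perm_eq_weight_rows _ (altK i0) (altJ i0) => j k.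
    exact: alt_line_end (altI j k) _ Hi0.
  - apply: perm_eq_weight_rows _ (altK^~ j0) (altI j0) => i k.
    exact: alt_line_end (altJ i k) _ Hj0.
move=> i j; rewrite LAE; have [pr pnr] := alt_line_card_weight (altK i j).
split; first by move=> k1 _; apply: alt_line_first_nonzero (altK i j) k1.
split; first exact: pr.
split; first exact: alt_line_weight1 (altK i j).
by split; [exact: pnr | exact: alt_line_weightn (altK i j)].
Qed.
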